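(* Let $p$ be a prime and let $\Phi:\mathbb{N}\to\mathbb{N}$ be strictly increasing. For every continuous function $f:\mathbb{Z}_p\to\mathbb{Z}_p$ there exists a unique sequence $(B(m))_{m\ge 0}=(B(\Phi,f;m))_{m\ge0}$ of elements of $\mathbb{Z}_p$ such that \[ f(x)=\sum_{m=0}^{\infty} B(\Phi,f;m)\,\chi(\Phi,m;x)\quad\text{for all }x\in\mathbb{Z}_p. \] Moreover this sequence is given by \[ B(\Phi,f;m)=\begin{cases} f(m) & \text{if } m<p^{1+\Phi(0)},\\ f(m)-f(m-M(m)) & \text{otherwise.}\end{cases} \]
   Context: $\mathbb{N}=\{0,1,2,\dots\}$. $v_p$ and $|\cdot|_p$ denote the $p$-adic valuation and absolute value on $\mathbb{Z}_p$, normalized by $v_p(p)=1$, $|p|_p=p^{-1}$. Every $x\in\mathbb{Z}_p$ is written $x=\sum_{i\ge0}x_ip^i$ with digits $x_i\in\{0,\dots,p-1\}$; for a nonnegative integer $m$, $m_i$ denote its base-$p$ digits. Set $\Phi(-1):=-1$. For $m\in\mathbb{N}$ let $\tau(m)=\tau(\Phi;m):=\min\{h\in\mathbb{N}: m<p^{1+\Phi(h)}\}$. For $m\in\mathbb{N}$ and $x\in\mathbb{Z}_p$, $\chi(\Phi,m;x):=1$ if $|x-m|_p\le p^{-1-\Phi(\tau(m))}$ and $\chi(\Phi,m;x):=0$ otherwise. For $m\ge p^{1+\Phi(0)}$ (i.e. $\tau(m)\ge1$), $M(m)=M(\Phi;m):=\sum_{i=\Phi(\tau(m)-1)+1}^{\Phi(\tau(m))}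 m_i p^i$. *)

(* MathComp. p-adic integers Z_p are modelled as the inverse limit
   of Z/p^n Z: an element is a coherent sequence of residues x_n in
   [0, p^n) (represented in int), with x_n = x_(n+1) mod p^n. *)
From HB Require Import structures.
From mathcomp Require Import all_boot all_order all_algebra.
Set Implicit Arguments. Unset Strict Implicit. Unset Printing Implicit Defensive.
Import Order.TTheory GRing.Theory Num.Theory.
Local Open Scope ring_scope.

Lemma modz_dvdm (d e m : int) : (e %| d)%Z -> ((m %% d)%Z %% e)%Z = (m %% e)%Z.
Proof.
move=> ed; apply/eqP; rewrite eqz_mod_dvd.
have -> : (m %% d)%Z - m = - ((m %/ d)%Z * d).
  by rewrite {2}(divz_eq m d) opprD addrCA subrr addr0.
by rewrite rpredN; apply: dvdz_trans ed (dvdz_mull _ (dvdzz d)).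
Qed.

Lemma dvdz_expS (p : nat) (n : nat) : ((p ^ n)%N%:Z %| (p ^ n.+1)%N%:Z)%Z.
Proof. rewrite dvdzE /= expnS; exact: dvdn_mull. Qed.

Record padic (p : nat) := MkZp {
  zp_res : nat -> int ;
  zp_coh : forall n, zp_res n = (zp_res n.+1 %% (p ^ n)%N%:Z)%Z
}.
Arguments zp_res {p}.

Section ZpOps.
Variable p : nat.

Definition zp_of_nat (m : nat) : padic p.
Proof.
refine (@MkZp p (fun n => (m%:Z %% (p ^ n)%N%:Z)%Z) _).
by move=> n; rewrite modz_dvdm // dvdz_expS.
Defined.

Definition zp_zero : padic p := zp_of_nat 0.

Definition zp_add (x y : padic p) : padic p.
Proof.
refine (@MkZp p (fun n => ((zp_res x n + zp_res y n) %% (p ^ n)%N%:Z)%Z) _).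
move=> n; rewrite modz_dvdm ?dvdz_expS //.
by rewrite (zp_coh x n) (zp_coh y n) modzDm.
Defined.

Definition zp_sub (x y : padic p) : padic p.
Proof.
refine (@MkZp p (fun n => ((zp_res x n - zp_res y n) %% (p ^ n)%N%:Z)%Z) _).
move=> n; rewrite modz_dvdm ?dvdz_expS //.
rewrite (zp_coh x n) (zp_coh y n).
by rewrite modzDml -modzDmr modzNm modzDmr.
Defined.
End ZpOps.

(* |x - y|_p <= p^(-k)  <->  x = y (mod p^k)  <->  the k-th residues agree *)
Definition zp_close (p : nat) (x y : padic p) (k : nat) : Prop :=
  zp_res x k = zp_res y k.

Definition zp_continuous (p : nat) (f : padic p -> padic p) : Prop :=
  forall (x : padic p) (k : nat), exists l : nat,
    forall y : padic p, zp_close y x l -> zp_close (f y) (f x) k.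

Fixpoint zp_psum (p : nat) (a : nat -> padic p) (N : nat) : padic p :=
  match N with
  | 0 => zp_zero p
  | N'.+1 => zp_add (zp_psum a N') (a N')
  end.

Definition zp_series_conv (p : nat) (a : nat -> padic p) (s : padic p) : Prop :=
  forall k : nat, exists N0 : nat, forall N : nat, (N0 <= N)%N ->
    zp_close (zp_psum a N) s k.

Definition digit (p m i : nat) : nat := ((m %/ p ^ i) %% p)%N.

(* tau(m) = min { h : m < p^(1 + Phi h) }; for strictly increasing Phi and
   p >= 2 this minimum is <= m, so it suffices to search h in [0, m]. *)
Definition tau (p : nat) (Phi : nat -> nat) (m : nat) : nat :=
  find (fun h => (m < p ^ (1 + Phi h))%N) (iota 0 m.+1).

(* chi(Phi, m; x) = 1 iff |x - m|_p <= p^(-1 - Phi(tau m)) *)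
Definition chi (p : nat) (Phi : nat -> nat) (m : nat) (x : padic p) : bool :=
  zp_res x (1 + Phi (tau p Phi m))%N == zp_res (zp_of_nat p m) (1 + Phi (tau p Phi m))%N.

Definition Mfun (p : nat) (Phi : nat -> nat) (m : nat) : nat :=
  (\sum_(Phi (tau p Phi m).-1 + 1 <= i < Phi (tau p Phi m) + 1) digit p m i * p ^ i)%N.

Definition chi_term (p : nat) (Phi : nat -> nat) (B : nat -> padic p) (x : padic p)
  (m : nat) : padic p :=
  if chi Phi m x then B m else zp_zero p.

Definition Bformula (p : nat) (Phi : nat -> nat) (f : padic p -> padic p) (m : nat) : padic p :=
  if (m < p ^ (1 + Phi 0))%N then f (zp_of_nat p m)
  else zp_sub (f (zp_of_nat p m)) (f (zp_of_nat p (m - Mfun p Phi m))).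

(* Write X_h for the residue of x modulo p^(1 + Phi h). Then chi(m; x) = 1
   exactly when m = X_(tau m), so the indices m with chi(m; x) = 1 are the
   distinct values of the nondecreasing sequence X_0 <= X_1 <= ..., and for
   such an m with tau m > 0 its predecessor in that sequence is m - M(m).
   Hence with the explicit coefficients the partial sum up to N telescopes
   to f(a), where a is the last chi-index below N; as N grows, a tends to x
   p-adically and continuity of f gives convergence. Conversely, at x = m
   no index n > m contributes, so f(m) = sum_(n <= m) B(n) chi(n; m) with
   chi(m; m) = 1, which determines B(m) from the B(n), n < m. *)
From HB Require Import structures.
From mathcomp Require Import all_boot all_order all_algebra.
From mathcomp Require Import zify.
From Stdlib Require Import FunctionalExtensionality ProofIrrelevance.
Set Implicit Arguments. Unset Strict Implicit. Unset Printing Implicit Defensive.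
Import Order.TTheory GRing.Theory Num.Theory.
Local Open Scope ring_scope.

Section PadicArithmetic.
Variable p : nat.
Implicit Types x y a b c : padic p.

Lemma zp_ext x y : (forall n, zp_res x n = zp_res y n) -> x = y.
Proof.
case: x y => fx cx [fy cy] /= eq_res.
have eq_f : fx = fy by apply: functional_extensionality.
by subst fy; f_equal; apply: proof_irrelevance.
Qed.

Lemma zp_res_mod x n : (zp_res x n %% (p ^ n)%N%:Z)%Z = zp_res x n.
Proof. by rewrite [in RHS](zp_coh x n) (zp_coh x n) modz_mod. Qed.

Lemma zp_res_modD x l d : zp_res x l = (zp_res x (l + d) %% (p ^ l)%N%:Z)%Z.
Proof.
elim: d => [|d IH]; first by rewrite addn0 zp_res_mod.
by rewrite IH (zp_coh x (l + d)) addnS modz_dvdm // dvdzE /= expnD dvdn_mulr.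
Qed.

Lemma zp_add0r x : zp_add (zp_zero p) x = x.
Proof. by apply: zp_ext => n /=; rewrite mod0z add0r zp_res_mod. Qed.

Lemma zp_addr0 x : zp_add x (zp_zero p) = x.
Proof. by apply: zp_ext => n /=; rewrite mod0z addr0 zp_res_mod. Qed.

Lemma zp_add_subr a b : zp_add a (zp_sub b a) = b.
Proof. by apply: zp_ext => n /=; rewrite modzDmr addrC subrK zp_res_mod. Qed.

Lemma zp_addrI a b c : zp_add a b = zp_add a c -> b = c.
Proof.
move=> eq_add; apply: zp_ext => n.
have /= eq_n := congr1 (fun z => zp_res z n) eq_add.
rewrite -(zp_res_mod b) -(zp_res_mod c).
rewrite -[zp_res b n](addKr (zp_res a n)) -[zp_res c n](addKr (zp_res a n)).
by rewrite !(addrC (- zp_res a n)) -!(modzDml (zp_res a n + _)) eq_n.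
Qed.

Lemma zp_psum_ext (u v : nat -> padic p) N :
  (forall i, (i < N)%N -> u i = v i) -> zp_psum u N = zp_psum v N.
Proof. by elim: N => [|N IH] //= eq_uv; rewrite IH ?eq_uv // => i /ltnW/eq_uv. Qed.

Lemma zp_psum_conv_eq (u : nat -> padic p) s N0 :
  (forall n, (N0 <= n)%N -> u n = zp_zero p) -> zp_series_conv u s ->
  zp_psum u N0 = s.
Proof.
move=> u_eq0 conv; have stable d : zp_psum u (N0 + d) = zp_psum u N0.
  by elim: d => [|d IH]; rewrite ?addn0 // addnS /= IH u_eq0 ?leq_addr ?zp_addr0.
apply: zp_ext => n; have [N1 close] := conv n.
by rewrite -(stable N1) close // addnC leq_addr.
Qed.

End PadicArithmetic.

Section PadicResidues.
Variable p : nat.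
Hypothesis p_gt0 : (0 < p)%N.

Definition zp_nat (x : padic p) (n : nat) : nat := `|zp_res x n|%N.

Lemma zp_resE (x : padic p) n : zp_res x n = (zp_nat x n)%:Z.
Proof.
by rewrite /zp_nat gez0_abs // (zp_coh x n) modz_ge0 // eqz_nat expn_eq0; lia.
Qed.

Lemma zp_nat_lt (x : padic p) n : (zp_nat x n < p ^ n)%N.
Proof.
by rewrite -ltz_nat -zp_resE (zp_coh x n) ltz_pmod // ltz_nat expn_gt0 p_gt0.
Qed.

Lemma zp_nat_of_nat m n : zp_nat (zp_of_nat p m) n = (m %% p ^ n)%N.
Proof. by rewrite /zp_nat /= modz_nat. Qed.

Lemma zp_nat_leq (x : padic p) l L : (l <= L)%N -> zp_nat x l = (zp_nat x L %% p ^ l)%N.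
Proof.
move=> /subnKC <-; apply/eqP.
by rewrite -eqz_nat -modz_nat -!zp_resE -zp_res_modD.
Qed.

End PadicResidues.

Local Open Scope nat_scope.

Lemma modn_expS_digit p m a : m %% p ^ a.+1 = m %% p ^ a + digit p m a * p ^ a.
Proof.
rewrite /digit modn_divl -expnS.
have mod_a : (m %% p ^ a.+1) %% p ^ a = m %% p ^ a.
  by rewrite modn_dvdm // expnS dvdn_mull.
by rewrite {1}(divn_eq (m %% p ^ a.+1) (p ^ a)) mod_a addnC.
Qed.

Lemma sum_digits p m a : \sum_(0 <= i < a) digit p m i * p ^ i = m %% p ^ a.
Proof.
elim: a => [|a IH]; first by rewrite big_geq // expn0 modn1.
by rewrite big_nat_recr //= IH modn_expS_digit.
Qed.

Lemma last_index_below (P : pred nat) b N : b < N -> P b ->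
  exists a, [/\ b <= a, a < N, P a & forall m, a < m < N -> ~~ P m].
Proof.
elim: N => [//|N IH]; rewrite ltnS leq_eqVlt => /orP[/eqP <- Pb|bN Pb].
  by exists b; split=> // m; lia.
case PN: (P N); first by exists N; split=> //; [lia | move=> m; lia].
have [a [ba aN Pa gap]] := IH bN Pb.
exists a; split=> //; first lia.
move=> m /andP[am]; rewrite ltnS leq_eqVlt => /orP[/eqP -> | mN]; first by rewrite PN.
by apply: gap; rewrite am.
Qed.

Section Characteristic.
Variable p : nat.
Hypothesis p_gt1 : 1 < p.
Variable Phi : nat -> nat.
Hypothesis Phi_incr : forall a b, a < b -> Phi a < Phi b.
Implicit Types x : padic p.

Let p_gt0 : 0 < p. Proof. exact: ltnW. Qed.

Lemma Phi_mono a b : a <= b -> Phi a <= Phi b.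
Proof. by rewrite leq_eqVlt => /orP[/eqP -> // | /Phi_incr/ltnW]. Qed.

Lemma leq_Phi n : n <= Phi n.
Proof. by elim: n => [|n IH] //; have := Phi_incr (ltnSn n); lia. Qed.

Lemma tau_spec m :
  [/\ tau p Phi m <= m, m < p ^ (1 + Phi (tau p Phi m)) &
      forall h, h < tau p Phi m -> p ^ (1 + Phi h) <= m].
Proof.
have has_h : has (fun h => m < p ^ (1 + Phi h)) (iota 0 m.+1).
  apply/hasP; exists m; first by rewrite mem_iota; lia.
  apply: leq_trans (ltn_expl m p_gt1) _.
  by rewrite leq_pexp2l // (leq_trans (leq_Phi m)).
have lt_tau := has_h; rewrite has_find size_iota in lt_tau.
split=> //; first by have := nth_find 0 has_h; rewrite /tau nth_iota.
move=> h lt_h; have := before_find 0 lt_h.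
by rewrite nth_iota ?add0n ?(ltn_trans lt_h) // => /negbT; rewrite -leqNgt.
Qed.

Lemma tau_leq m h : m < p ^ (1 + Phi h) -> tau p Phi m <= h.
Proof.
have [_ _ below] := tau_spec m; move=> lt_m; rewrite leqNgt.
by apply/negP => /below; rewrite leqNgt lt_m.
Qed.

(* The block of digits of m between positions Phi (tau m - 1) + 1 and Phi (tau m)
   is everything above the bottom 1 + Phi (tau m - 1) digits. *)
Lemma subn_Mfun m : 0 < tau p Phi m ->
  m - Mfun p Phi m = m %% p ^ (1 + Phi (tau p Phi m).-1).
Proof.
move=> tau_gt0; have [_ lt_m _] := tau_spec m.
set t := tau p Phi m in tau_gt0 lt_m *.
have le_Phi : Phi t.-1 + 1 <= Phi t + 1 by rewrite leq_add2r Phi_mono // leq_pred.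
have := @big_cat_nat _ _ addn _ _ _ xpredT (fun i => digit p m i * p ^ i) (leq0n _) le_Phi.
rewrite !sum_digits -/(Mfun p Phi m) [Phi t + 1]addnC [Phi t.-1 + 1]addnC.
by rewrite modn_small // => {1}->; rewrite addnK.
Qed.

Definition zp_trunc (x : padic p) h := zp_nat x (1 + Phi h).

Lemma zp_trunc_lt x h : zp_trunc x h < p ^ (1 + Phi h).
Proof. exact: zp_nat_lt. Qed.

Lemma zp_trunc_mod x s h : s <= h -> zp_trunc x s = zp_trunc x h %% p ^ (1 + Phi s).
Proof. by move=> le_sh; apply: zp_nat_leq; rewrite // leq_add2l Phi_mono. Qed.

Lemma zp_trunc_mono x s h : s <= h -> zp_trunc x s <= zp_trunc x h.
Proof. by move=> /(zp_trunc_mod x) ->; apply: leq_mod. Qed.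

Lemma chiE x m : chi Phi m x = (zp_trunc x (tau p Phi m) == m).
Proof.
have [_ lt_m _] := tau_spec m.
by rewrite /chi zp_resE // /= modz_nat modn_small.
Qed.

Lemma chi_trunc x h : chi Phi (zp_trunc x h) x.
Proof.
rewrite chiE (zp_trunc_mod x (tau_leq (zp_trunc_lt x h))).
by have [_ lt _] := tau_spec (zp_trunc x h); rewrite modn_small.
Qed.

Lemma chi_of_nat m : chi Phi m (zp_of_nat p m).
Proof. by rewrite chiE /zp_trunc zp_nat_of_nat; have [_ /modn_small -> _] := tau_spec m. Qed.

Lemma chi_of_nat_gt m n : m < n -> ~~ chi Phi n (zp_of_nat p m).
Proof.
rewrite chiE /zp_trunc zp_nat_of_nat => lt_mn.
by apply/negP => /eqP eq_n; have := leq_mod m (p ^ (1 + Phi (tau p Phi n))); lia.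
Qed.

Lemma chi_mod x h m : chi Phi m x -> zp_trunc x h <= m -> m %% p ^ (1 + Phi h) = zp_trunc x h.
Proof.
rewrite chiE => /eqP eq_m le_m.
case: (leqP h (tau p Phi m)) => [le_h | lt_h]; first by rewrite -eq_m -zp_trunc_mod.
have eq_hm : zp_trunc x h = m.
  by apply/eqP; rewrite eqn_leq le_m -{1}eq_m zp_trunc_mono // ltnW.
by rewrite -{1}eq_hm modn_small // zp_trunc_lt.
Qed.

Lemma chi_first x N m : chi Phi N x -> tau p Phi N = 0 -> m < N -> ~~ chi Phi m x.
Proof.
move=> chi_N tau0 lt_mN; have [_ lt_N _] := tau_spec N.
rewrite tau0 in lt_N; have := tau_leq (ltn_trans lt_mN lt_N).
rewrite leqn0 => /eqP tau_m0; move: chi_N; rewrite !chiE tau0 tau_m0 => /eqP ->.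
by rewrite eq_sym neq_ltn lt_mN.
Qed.

Lemma chi_prev x N : chi Phi N x -> 0 < tau p Phi N ->
  [/\ zp_trunc x (tau p Phi N).-1 < N, chi Phi (zp_trunc x (tau p Phi N).-1) x,
      forall m, zp_trunc x (tau p Phi N).-1 < m < N -> ~~ chi Phi m x &
      N - Mfun p Phi N = zp_trunc x (tau p Phi N).-1].
Proof.
move=> chi_N tau_gt0; have [_ lt_N below] := tau_spec N.
move: (chi_N); rewrite chiE => /eqP eq_N.
set t := tau p Phi N in tau_gt0 lt_N below eq_N *; set a := zp_trunc x t.-1.
have lt_aN : a < N by apply: leq_trans (zp_trunc_lt _ _) (below _ _); lia.
split=> //; first exact: chi_trunc.
- move=> m /andP[lt_am lt_mN]; rewrite chiE; apply/negP => /eqP eq_m.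
  case: (leqP (tau p Phi m) t.-1) => le_tau.
    by have := zp_trunc_mono x le_tau; rewrite eq_m; lia.
  have eq_t : tau p Phi m = t by have := tau_leq (ltn_trans lt_mN lt_N); lia.
  by rewrite eq_t eq_N in eq_m; lia.
- by rewrite subn_Mfun // -{1}eq_N -zp_trunc_mod //; lia.
Qed.

Section Expansion.
Variable f : padic p -> padic p.

Lemma zp_psum_Bformula x N :
  ((forall m, m < N -> ~~ chi Phi m x) ->
     zp_psum (chi_term Phi (Bformula Phi f) x) N = zp_zero p) /\
  (forall a, a < N -> chi Phi a x -> (forall m, a < m < N -> ~~ chi Phi m x) ->
     zp_psum (chi_term Phi (Bformula Phi f) x) N = f (zp_of_nat p a)).
Proof.
elim: N => [|N [IH_none IH_last]]; first by split=> // a.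
split=> [none | a lt_aN chi_a gap] /=; rewrite [chi_term _ _ _ N]/chi_term.
  by rewrite (negbTE (none N _)) // zp_addr0 IH_none // => m /ltnW/none.
move: lt_aN; rewrite ltnS leq_eqVlt => /orP[/eqP eq_aN | lt_aN]; last first.
  rewrite (negbTE (gap N _)) ?lt_aN ?ltnSn // zp_addr0.
  apply: IH_last => // m /andP[lt_am lt_mN].
  by apply: gap; rewrite lt_am ltnW.
subst a; rewrite chi_a /Bformula; have [_ lt_N below] := tau_spec N.
case: (posnP (tau p Phi N)) => [tau0 | tau_gt0].
  rewrite tau0 in lt_N; rewrite IH_none => [|m]; last exact: chi_first.
  by rewrite zp_add0r lt_N.
have [lt_aN chi_a' gap' ->] := chi_prev chi_a tau_gt0.
by rewrite (IH_last _ lt_aN chi_a' gap') ltnNge below // zp_add_subr.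
Qed.

Lemma Bformula_expansion : zp_continuous f ->
  forall x, zp_series_conv (chi_term Phi (Bformula Phi f) x) (f x).
Proof.
move=> f_cont x k; have [l close_l] := f_cont x k.
exists (zp_trunc x l).+1 => N lt_N.
have [a [le_a lt_aN chi_a gap]] := last_index_below (P := chi Phi ^~ x) lt_N (chi_trunc x l).
have [_ telescope] := zp_psum_Bformula x N; rewrite (telescope a lt_aN chi_a gap).
(* a agrees with x modulo p^(1 + Phi l), hence modulo p^l. *)
apply: close_l; rewrite /zp_close !zp_resE // zp_nat_of_nat.
have le_l : l <= 1 + Phi l by rewrite (leq_trans (leq_Phi l)).
rewrite (zp_nat_leq p_gt0 x le_l) -/(zp_trunc x l) -(chi_mod chi_a le_a) modn_dvdm //.
by rewrite dvdn_exp2l.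
Qed.

End Expansion.

Lemma zp_psum_chi_of_nat (B : nat -> padic p) f m :
  (forall x, zp_series_conv (chi_term Phi B x) (f x)) ->
  zp_psum (chi_term Phi B (zp_of_nat p m)) m.+1 = f (zp_of_nat p m).
Proof.
move=> expand; apply: zp_psum_conv_eq (expand _) => n lt_mn.
by rewrite /chi_term (negbTE (chi_of_nat_gt lt_mn)).
Qed.

Lemma expansion_unique (B1 B2 : nat -> padic p) f :
  (forall x, zp_series_conv (chi_term Phi B1 x) (f x)) ->
  (forall x, zp_series_conv (chi_term Phi B2 x) (f x)) ->
  B1 =1 B2.
Proof.
move=> expand1 expand2 m; elim/ltn_ind: m => m IH.
have := zp_psum_chi_of_nat m expand1; rewrite -(zp_psum_chi_of_nat m expand2) /=.
rewrite (zp_psum_ext (v := chi_term Phi B2 (zp_of_nat p m))) => [|n /IH eq_n].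
  by move/zp_addrI; rewrite /chi_term chi_of_nat.
by rewrite /chi_term eq_n.
Qed.

End Characteristic.

Theorem proposition1 (p : nat) (Phi : nat -> nat) (f : padic p -> padic p) :
  prime p ->
  (forall a b : nat, (a < b)%N -> (Phi a < Phi b)%N) ->
  zp_continuous f ->
  (exists! B : nat -> padic p,
      forall x : padic p, zp_series_conv (chi_term Phi B x) (f x)) /\
  (forall B : nat -> padic p,
      (forall x : padic p, zp_series_conv (chi_term Phi B x) (f x)) ->
      forall m : nat, B m = Bformula Phi f m).
Proof.
move=> /prime_gt1 p_gt1 Phi_incr f_cont.
have expand := Bformula_expansion p_gt1 Phi_incr f_cont.
split=> [|B expandB]; last exact: expansion_unique expandB expand.
exists (Bformula Phi f); split=> // B expandB.
by apply: functional_extensionality; exact: expansion_unique expand expandB.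
Qed.
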